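(* Let $d\in\mathbb{Z}^+$ and $e\in\{1,\dots,d-1\}$. For every $B\in\mathcal{N}_d(\mathbb{R}^2)$, \[ |\mathcal{C}_{d,e}(B)|<2^{2^{d+2}}. \]
   Context: For $k\in\mathbb{Z}^+$, a curve of degree $k$ is the zero set in $\mathbb{R}^2$ of a polynomial in $\mathbb{R}[x,y]$ of degree exactly $k$; $\mathcal{C}_k$ is the family of such curves. For $k\in\mathbb{Z}^+$ let $I_k=\{(i,j)\in\mathbb{Z}_{\ge 0}^2: 1\le i+j\le k\}$ and $\psi_k:\mathbb{R}^2\to\mathbb{R}^{\binom{k+2}{2}-1}$, $\psi_k(a_1,a_2)=(a_1^ia_2^j)_{(i,j)\in I_k}$; $\dim S$ is the dimension of the affine hull of $S$ ($\dim\emptyset=-1$). For $A\subseteq\mathbb{R}^2$, $\mathcal{N}_d(A)$ is the family of $B\subseteq A$ with $|B|=\binom{d+2}{2}-3$ such that: (a) $\dim\psi_d(B)=\binom{d+2}{2}-4$; (b) for all $e\in\{1,\dots,d-1\}$ and $C\in\mathcal{C}_e$, $|B\cap C|<\binom{d+2}{2}-\binom{d-e+2}{2}$; (c) for all $e\in\{1,\dots,d-1\}$ and $C\in\mathcal{C}_e$ with $|B\cap C|=\binom{d+2}{2}-\binom{d-e+2}{2}-1$, $\dim\psi_{d-e}(B\setminus C)=\binom{d-e+2}{2}-3$; (d) for all $e\in\{1,\dots,d-1\}$ and $C\in\mathcal{C}_e$ with $|B\cap C|<\binom{d+2}{2}-\binom{d-e+2}{2}-1$, $\dim\psi_{d-e}(B\setminus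 C)>\binom{d-e+2}{2}-3$. For $B\subseteq\mathbb{R}^2$, $\mathcal{C}_{d,e}(B):=\{C\in\mathcal{C}_e: |C\cap B|=\binom{d+2}{2}-\binom{d-e+2}{2}-1\}$. *)

From HB Require Import structures.
From mathcomp Require Import all_boot all_order all_algebra.
From mathcomp Require Import reals.
From mathcomp Require Import mpoly.
Set Implicit Arguments. Unset Strict Implicit. Unset Printing Implicit Defensive.
Import Order.TTheory GRing.Theory Num.Theory.
Local Open Scope ring_scope.

Section Defs.
Variable R : realType.

(* point of R^2 as a valuation of the two variables x (='X_0), y (='X_1) *)
Definition pt_val (a : R * R) : 'I_2 -> R :=
  fun i => if val i == 0%N then a.1 else a.2.

Definition zeroset (p : {mpoly R[2]}) : pred (R * R) :=
  fun a => p.@[pt_val a] == 0.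

(* C \in C_k : C is the zero set of a polynomial of degree exactly k
   (msize p = 1 + total degree of p) *)
Definition is_curve (k : nat) (C : pred (R * R)) : Prop :=
  exists p : {mpoly R[2]}, msize p = k.+1 /\ C =1 zeroset p.

Definition exps (k : nat) : seq (nat * nat) :=
  [seq ij <- [seq (i, j) | i <- iota 0 k.+1, j <- iota 0 k.+1]
     | (0 < ij.1 + ij.2 <= k)%N].

Definition psi (k : nat) (a : R * R) : 'rV[R]_(size (exps k)) :=
  \row_(t < size (exps k))
     (a.1 ^+ (nth (0%N, 0%N) (exps k) t).1 * a.2 ^+ (nth (0%N, 0%N) (exps k) t).2).

(* dimension of the affine hull of a finite set of vectors (given as a list);
   -1 for the empty set *)
Definition affdim (n : nat) (s : seq 'rV[R]_n) : int :=
  if s is v0 :: _ then (\dim <<[seq v - v0 | v <- s]>>%VS)%:Z else (-1)%R.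

Definition dimpsi (k : nat) (S : seq (R * R)) : int :=
  affdim [seq psi k a | a <- S].

Definition bnm (k : nat) : int := ('C(k.+2, 2))%:Z.

(* B \in N_d(R^2); B is a finite set given as a duplicate-free list *)
Definition in_Nd (d : nat) (B : seq (R * R)) : Prop :=
  [/\ uniq B /\ (size B)%:Z = bnm d - 3,
      dimpsi d B = bnm d - 4,
      (forall e C, (1 <= e <= d - 1)%N -> is_curve e C ->
         (count C B)%:Z < bnm d - bnm (d - e)),
      (forall e C, (1 <= e <= d - 1)%N -> is_curve e C ->
         (count C B)%:Z = bnm d - bnm (d - e) - 1 ->
         dimpsi (d - e) (filter (predC C) B) = bnm (d - e) - 3) &
      (forall e C, (1 <= e <= d - 1)%N -> is_curve e C ->
         (count C B)%:Z < bnm d - bnm (d - e) - 1 ->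
         dimpsi (d - e) (filter (predC C) B) > bnm (d - e) - 3)].

Definition in_Cde (d e : nat) (B : seq (R * R)) (C : pred (R * R)) : Prop :=
  is_curve e C /\ (count C B)%:Z = bnm d - bnm (d - e) - 1.

End Defs.

(* Two curves of C_{d,e}(B) meeting B in the same points coincide.  Otherwise,
   with C1 = Z(p1) and C2 = Z(p2), pick t in B off C1 (C1 misses at least
   bnm (d - e) - 2 > 0 points of B); the member p2(t) p1 - p1(t) p2 of their
   pencil has degree at most e and vanishes on C1 ∩ B and at t, i.e. on
   bnm d - bnm (d - e) points of B, which condition (b) of N_d forbids unless it
   is the zero polynomial, in which case p1 and p2 have the same zeros.  Hence
   C ↦ C ∩ B is injective on C_{d,e}(B), so |C_{d,e}(B)| <= 2^|B|, and
   |B| = binom(d+2, 2) - 3 < 2^(d+2). *)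

From HB Require Import structures.
From mathcomp Require Import all_boot all_order all_algebra.
From mathcomp Require Import reals.
From mathcomp Require Import mpoly.
From mathcomp Require Import zify.
Set Implicit Arguments. Unset Strict Implicit. Unset Printing Implicit Defensive.
Import Order.TTheory GRing.Theory Num.Theory.
Local Open Scope ring_scope.

Lemma bin_le_exp (m k : nat) : ('C(m, k) <= 2 ^ m)%N.
Proof.
elim: m k => [|m IHm] [|k] //; first by rewrite bin0 expn_gt0.
by rewrite binS expnS mul2n -addnn leq_add.
Qed.

Lemma uniq_map_nth (T : Type) (U : eqType) (x0 : T) (f : T -> U) (s : seq T) :
  (forall i j, (i < j < size s)%N -> f (nth x0 s i) != f (nth x0 s j)) ->
  uniq (map f s).
Proof.
move=> neq; apply/(uniqP (f x0)) => i j; rewrite !inE size_map => lti ltj.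
rewrite !(nth_map x0) //; case: (ltngtP i j) => // [lt_ij|lt_ji] eq_f.
  by have := neq i j; rewrite lt_ij ltj eq_f eqxx => /(_ isT).
by have := neq j i; rewrite lt_ji lti eq_f eqxx => /(_ isT).
Qed.

Lemma sub_count_lt (T : eqType) (a1 a2 : pred T) (s : seq T) (x : T) :
  {in s, forall y, a1 y -> a2 y} -> x \in s -> a2 x -> ~~ a1 x ->
  (count a1 s < count a2 s)%N.
Proof.
move=> sub12 xs a2x a1x.
have -> : count a2 s = (count (predI a1 a2) s + count (predI (predC a1) a2) s)%N.
  by rewrite -!count_filter count_predC size_filter.
have -> : count a1 s = count (predI a1 a2) s.
  by apply: eq_in_count => y ys /=; case: (boolP (a1 y)) => // /(sub12 y ys) ->.
have outside : (0 < count (predI (predC a1) a2) s)%N.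
  by rewrite -has_count; apply/hasP; exists x => //=; rewrite a1x.
by rewrite -[X in (X < _)%N]addn0 ltn_add2l.
Qed.

Lemma size_uniq_traces (T : eqType) (s : seq T) (Cs : seq (pred T)) :
  uniq [seq map C s | C <- Cs] -> (size Cs <= 2 ^ size s)%N.
Proof.
pose trace (C : pred T) := map_tuple C (in_tuple s).
have -> : [seq map C s | C <- Cs] = map val (map trace Cs) by rewrite -map_comp.
move/map_uniq/card_uniqP; rewrite size_map => <-.
by rewrite (leq_trans (max_card _)) // card_tuple card_bool.
Qed.

Section Pencil.
Variables (F : idomainType) (n : nat) (p1 p2 : {mpoly F[n]}) (v : 'I_n -> F).

Definition pencil : {mpoly F[n]} := p2.@[v] *: p1 - p1.@[v] *: p2.

Lemma meval_pencil_root : pencil.@[v] = 0.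
Proof. by rewrite mevalB !mevalZ mulrC subrr. Qed.

Lemma meval_pencil_common_root (w : 'I_n -> F) :
  p1.@[w] = 0 -> p2.@[w] = 0 -> pencil.@[w] = 0.
Proof. by rewrite mevalB !mevalZ => -> ->; rewrite !mulr0 subrr. Qed.

Lemma msize_pencil : (msize pencil <= maxn (msize p1) (msize p2))%N.
Proof.
rewrite (leq_trans (msizeD_le _ _)) // msizeN.
by rewrite geq_max !leq_max !msizeZ_le ?orbT.
Qed.

Lemma pencil_eq0_roots (w : 'I_n -> F) :
  p1.@[v] != 0 -> p2.@[v] != 0 -> pencil = 0 ->
  (p1.@[w] == 0) = (p2.@[w] == 0).
Proof.
move=> p1v p2v /(congr1 (meval w)); rewrite meval0 mevalB !mevalZ => /eqP.
rewrite subr_eq0 => /eqP eq_w.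
have := mulf_eq0 p2.@[v] p1.@[w].
by rewrite eq_w mulf_eq0 (negbTE p1v) (negbTE p2v) /= => ->.
Qed.

End Pencil.

Lemma le_bnm (m n : nat) : (m <= n)%N -> bnm m <= bnm n.
Proof. by move=> le_mn; rewrite lez_nat leq_bin2l. Qed.

Lemma lt_bnm (m n : nat) : (m < n)%N -> bnm m < bnm n.
Proof.
move=> lt_mn; rewrite ltz_nat (leq_trans _ (leq_bin2l 2 (_ : m.+3 <= n.+2)%N)) //.
by rewrite (binS m.+2 1) bin1; lia.
Qed.

Section Nd.
Variables (R : realType) (d e : nat) (B : seq (R * R)).
Hypothesis B_Nd : in_Nd d B.

Lemma in_Nd_size_lt : (size B < 2 ^ (d + 2))%N.
Proof.
case: B_Nd => [[_ size_B] _ _ _ _]; have := bin_le_exp (d + 2) 2.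
by move: size_B; rewrite /bnm addn2; lia.
Qed.

Hypothesis e_range : (1 <= e <= d - 1)%N.

Lemma count_zeroset_lt (p : {mpoly R[2]}) :
  p != 0 -> (msize p <= e.+1)%N -> (count (zeroset p) B)%:Z < bnm d - bnm (d - e).
Proof.
case: B_Nd => [_ _ small_meets _ _] p_neq0 size_p.
have [/eqP/msize_poly1P [c c_neq0 ->] | p_nonconst] := eqVneq (msize p) 1%N.
  rewrite (eq_count (a2 := pred0)) ?count_pred0; last first.
    by move=> a; rewrite /zeroset mevalC (negbTE c_neq0).
  by rewrite subr_gt0 lt_bnm //; lia.
have size_p0 : msize p != 0%N by rewrite msize_poly_eq0.
set e' := (msize p).-1.
have e'_range : (1 <= e' <= d - 1)%N by rewrite /e'; lia.
have curve_p : is_curve e' (zeroset p) by exists p; split => //; rewrite /e'; lia.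
apply: lt_le_trans (small_meets e' _ e'_range curve_p) _.
by rewrite lerD2l lerN2 le_bnm //; lia.
Qed.

Lemma in_Cde_has_outside (C : pred (R * R)) : in_Cde d e B C -> has (predC C) B.
Proof.
case: B_Nd => [[_ size_B] _ _ _ _] [_ count_C].
have three : 3 <= bnm (d - e) := le_bnm (_ : 1 <= d - e)%N.
by rewrite has_count; have := count_predC C B; move: size_B count_C three; lia.
Qed.

Lemma in_Cde_eq_on (C1 C2 : pred (R * R)) :
  in_Cde d e B C1 -> in_Cde d e B C2 -> {in B, C1 =1 C2} -> C1 =1 C2.
Proof.
move=> C1_de C2_de eq_on_B.
case: (C1_de) => [[p1 [size_p1 C1E]] count_C1]; case: C2_de => [[p2 [size_p2 C2E]] _].
have /hasP [t tB /= C1t] := in_Cde_has_outside C1_de.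
have p1t : p1.@[pt_val t] != 0 by move: C1t; rewrite C1E.
have p2t : p2.@[pt_val t] != 0 by move: C1t; rewrite eq_on_B // C2E.
set p := pencil p1 p2 (pt_val t).
have [p_eq0 | p_neq0] := eqVneq p 0.
  by move=> x; rewrite C1E C2E /zeroset (pencil_eq0_roots _ p1t p2t p_eq0).
have size_p : (msize p <= e.+1)%N.
  by apply: leq_trans (msize_pencil p1 p2 _) _; rewrite geq_max size_p1 size_p2 leqnn.
have more_meets : (count C1 B < count (zeroset p) B)%N.
  apply: (sub_count_lt _ tB); last exact: C1t.
    move=> y yB C1y; apply/eqP/meval_pencil_common_root; apply/eqP.
      by move: C1y; rewrite C1E.
    by move: C1y; rewrite eq_on_B // C2E.
  by rewrite /zeroset meval_pencil_root.
have := count_zeroset_lt p_neq0 size_p; move: count_C1 more_meets.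
by set bd := bnm d; set be := bnm (d - e); lia.
Qed.

End Nd.

Theorem lemma29 (R : realType) (d e : nat) (B : seq (R * R)) :
  (0 < d)%N -> (1 <= e <= d - 1)%N -> in_Nd d B ->
  forall Cs : seq (pred (R * R)),
    (forall i, (i < size Cs)%N -> in_Cde d e B (nth (fun _ => false) Cs i)) ->
    (forall i j, (i < j < size Cs)%N -> ~ (nth (fun _ => false) Cs i =1 nth (fun _ => false) Cs j)) ->
    (size Cs < 2 ^ (2 ^ (d + 2)))%N.
Proof.
move=> _ e_range B_Nd Cs Cs_de Cs_distinct.
have traces_uniq : uniq [seq map C B | C <- Cs].
  apply: (@uniq_map_nth _ _ xpred0 (fun C => map C B)) => i j /andP [lt_ij lt_j].
  apply/eqP => /eq_in_map same_trace; apply: (Cs_distinct i j); first by rewrite lt_ij.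
  apply: (in_Cde_eq_on B_Nd e_range (Cs_de i _) (Cs_de j lt_j) same_trace).
  exact: ltn_trans lt_ij lt_j.
apply: leq_ltn_trans (size_uniq_traces traces_uniq) _.
by rewrite ltn_exp2l // (in_Nd_size_lt B_Nd).
Qed.
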